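(* Let $r \in \mathbb{Q}_{>0}$ be such that $S_r$ is atomic. The following are equivalent: (1) $r \in \mathbb{N}$; (2) $\omega(S_r) < \infty$; (3) $S_r$ is globally tame; (4) $S_r$ is locally tame.
   Context: For $q \in \mathbb{Q}_{>0}$, $\mathsf{n}(q),\mathsf{d}(q)$ are the positive coprime integers with $q = \mathsf{n}(q)/\mathsf{d}(q)$. $S_r$ is the additive submonoid of $(\mathbb{Q}_{\ge 0},+)$ generated by $\{r^n : n \in \mathbb{N}_0\}$; it is atomic exactly when $r=1$ or $\mathsf{n}(r)>1$. For $x,y \in S_r$, $x \mid_{S_r} y$ means $y = x + w$ for some $w \in S_r$. Omega function: for $x \ne 0$, $\omega(x)$ is the smallest $n \in \mathbb{N}$ such that whenever $x \mid_{S_r} a_1 + \dots + a_t$ for atoms $a_i$, there is $T \subseteq \{1,\dots,t\}$ with $|T| \le n$ and $x \mid_{S_r} \sum_{i \in T} a_i$ (and $\omega(x) = \infty$ if none exists); $\omega(S_r) = \sup\{\omega(a) : a \text{ an atom}\}$. Factorizations are elements of the free commutative monoid $\mathsf{Z}(S_r)$ on the atoms; $\mathsf{Z}(x)$ is the set of factorizations of $x$, $|z|$ is the length. For $z = \sum_a \mu_a a$, $z' = \sum_a \nu_a a$, $\gcd(z,z') = \sum_a \min\{\mu_a,\nu_a\}a$ and $\mathsf{d}(z,z') = \max\{|z|-|\gcd(z,z')|, |z'|-|\gcd(z,z')|\}$. For an atom $a$, the local tame degree $\mathsf{t}(a)$ is the smallest $n \in \mathbb{N}_0 \cup \{\infty\}$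 such that for every $x \in S_r$ with $a \mid_{S_r} x$ and every $z \in \mathsf{Z}(x)$ there exists $z' \in \mathsf{Z}(x)$ containing $a$ with $\mathsf{d}(z,z') \le n$. $S_r$ is locally tame if $\mathsf{t}(a) < \infty$ for every atom $a$, and globally tame if $\mathsf{t}(S_r) = \sup_a \mathsf{t}(a) < \infty$. *)

From HB Require Import structures.
From mathcomp Require Import all_boot all_order all_algebra.
Set Implicit Arguments. Unset Strict Implicit. Unset Printing Implicit Defensive.
Import Order.TTheory GRing.Theory Num.Theory.
Local Open Scope ring_scope.

Definition inS (r x : rat) : Prop :=
  exists c : seq nat, x = \sum_(i < size c) (nth 0%N c i)%:R * r ^+ i.

Definition dvdS (r x y : rat) : Prop :=
  inS r x /\ inS r y /\ exists w, inS r w /\ y = x + w.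

(* atoms of S_r (the only unit of S_r is 0) *)
Definition is_atom (r a : rat) : Prop :=
  inS r a /\ a <> 0 /\
  forall b c, inS r b -> inS r c -> a = b + c -> b = 0 \/ c = 0.

(* z (a finite multiset of atoms, represented by a sequence up to order)
   is a factorization of x *)
Definition is_fact (r x : rat) (z : seq rat) : Prop :=
  (forall a, a \in z -> is_atom r a) /\ x = \sum_(a <- z) a.

Definition atomic (r : rat) : Prop :=
  forall x, inS r x -> x <> 0 -> exists z, is_fact r x z.

Definition omega_le (r x : rat) (n : nat) : Prop :=
  forall s : seq rat, (forall a, a \in s -> is_atom r a) ->
    dvdS r x (\sum_(a <- s) a) ->
    exists s', subseq s' s /\ (size s' <= n)%N /\ dvdS r x (\sum_(a <- s') a).

Definition omega_Sr_finite (r : rat) : Prop :=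
  exists N : nat, forall a, is_atom r a -> omega_le r a N.

Definition gcd_len (z z' : seq rat) : nat :=
  (\sum_(a <- undup z) minn (count_mem a z) (count_mem a z'))%N.

Definition fdist (z z' : seq rat) : nat :=
  maxn (size z - gcd_len z z') (size z' - gcd_len z z').

Definition tame_le (r a : rat) (n : nat) : Prop :=
  forall x, inS r x -> dvdS r a x ->
  forall z, is_fact r x z ->
  exists z', [/\ is_fact r x z', a \in z' & (fdist z z' <= n)%N].

Definition locally_tame (r : rat) : Prop :=
  forall a, is_atom r a -> exists n, tame_le r a n.

Definition globally_tame (r : rat) : Prop :=
  exists n : nat, forall a, is_atom r a -> tame_le r a n.

(** An element of S_r is encoded by a coefficient sequence c, standing for
    sum_i c_i r^i, a sum of [sumn c] generators.

    - If r = n is an integer, S_r = N and its only atom is 1: omega(S_r) = 1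
      and every tame degree is 0.  This gives (1) => (2), (1) => (3); and
      (3) => (4) is immediate.
    - Otherwise r = A/B with A, B >= 2 coprime (A = 1 is excluded because
      S_{1/B} has no atoms).  Clearing denominators shows that A divides the
      constant coefficient of suitable representations; from this, every
      representation of r^k uses one generator, so the atoms are exactly the
      powers r^k.  Then omega(S_r) and the tame degree t(1) are infinite:
      for r < 1 we compare 1 with B^k copies of r^k, whose sum is A^k; for
      r > 1 we compare r^k with A^k copies of 1, and for t(1) we use that
      every factorization of B r^k containing 1 has at least k atoms.
      This gives (2) => (1) and (4) => (1). *)

From HB Require Import structures.
From mathcomp Require Import all_boot all_order all_algebra.
From mathcomp Require Import ring lra zify.
From Stdlib Require Import Classical_Prop.
Import Order.TTheory GRing.Theory Num.Theory.
Local Open Scope ring_scope.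

(** ** Coefficient sequences *)

Definition rep_val (r : rat) (c : seq nat) : rat :=
  \sum_(i < size c) (nth 0%N c i)%:R * r ^+ i.

Lemma rep_val_nil (r : rat) : rep_val r [::] = 0.
Proof. by rewrite /rep_val big_ord0. Qed.

Lemma rep_val_cons (r : rat) x c : rep_val r (x :: c) = x%:R + r * rep_val r c.
Proof.
rewrite /rep_val big_ord_recl /= expr0 mulr1; congr (_ + _).
by rewrite big_distrr; apply: eq_bigr => i _ /=; rewrite exprS mulrCA.
Qed.

Fixpoint addrep (c d : seq nat) : seq nat :=
  match c, d with
  | [::], _ => d
  | _, [::] => c
  | x :: c', y :: d' => (x + y)%N :: addrep c' d'
  end.

Lemma rep_val_add (r : rat) c d : rep_val r (addrep c d) = rep_val r c + rep_val r d.
Proof.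
elim: c d => [|x c IH] [|y d] /=; rewrite ?rep_val_nil ?add0r ?addr0 //.
by rewrite !rep_val_cons IH natrD mulrDr; ring.
Qed.

Lemma sumn_addrep c d : sumn (addrep c d) = (sumn c + sumn d)%N.
Proof. elim: c d => [|x c IH] [|y d] //=; [by rewrite addn0 | rewrite IH; lia]. Qed.

Lemma head_addrep c d : head 0%N (addrep c d) = (head 0%N c + head 0%N d)%N.
Proof. by case: c d => [|x c] [|y d] //=; rewrite addn0. Qed.

Definition bump_head (d : seq nat) (t : nat) : seq nat := (head 0%N d + t)%N :: behead d.

Lemma rep_val_bump_head (r : rat) d t : rep_val r (bump_head d t) = rep_val r d + t%:R.
Proof.
case: d => [|y d]; rewrite /bump_head /= ?rep_val_cons ?rep_val_nil ?natrD; ring.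
Qed.

Lemma sumn_bump_head d t : sumn (bump_head d t) = (sumn d + t)%N.
Proof. by case: d => [|y d] /=; lia. Qed.

Definition monom (i m : nat) : seq nat := nseq i 0%N ++ [:: m].

Lemma rep_val_monom (r : rat) i m : rep_val r (monom i m) = m%:R * r ^+ i.
Proof.
elim: i => [|i IH].
  by rewrite /monom /= rep_val_cons rep_val_nil mulr0 addr0 expr0 mulr1.
by rewrite /monom /= rep_val_cons -/(monom i m) IH add0r exprS; ring.
Qed.

Lemma sumn_monom i m : sumn (monom i m) = m.
Proof. by rewrite /monom sumn_cat sumn_nseq /=; lia. Qed.

Lemma rep_val_ge0 (r : rat) c : 0 <= r -> 0 <= rep_val r c.
Proof.
move=> hr; elim: c => [|x c IH]; first by rewrite rep_val_nil.
by rewrite rep_val_cons addr_ge0 ?ler0n ?mulr_ge0.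
Qed.

Lemma rep_val_ge_head (r : rat) x c : 0 <= r -> x%:R <= rep_val r (x :: c).
Proof. by move=> hr; rewrite rep_val_cons lerDl mulr_ge0 // rep_val_ge0. Qed.

Lemma rep_val_eq0 (r : rat) c : 0 < r -> rep_val r c = 0 -> sumn c = 0%N.
Proof.
move=> hr; elim: c => [|x c IH] //; rewrite rep_val_cons => h.
have hrc : 0 <= r * rep_val r c by rewrite mulr_ge0 ?rep_val_ge0 // ltW.
have hx : x%:R = 0 :> rat by apply/le_anti; rewrite ler0n andbT -h lerDl.
have : r * rep_val r c = 0 by rewrite -h hx add0r.
move/eqP; rewrite mulf_eq0 (gt_eqF hr) /= => /eqP /IH ->.
by move: hx => /eqP; rewrite pnatr_eq0 => /eqP ->.
Qed.

Lemma sumn0_rep_val (r : rat) c : sumn c = 0%N -> rep_val r c = 0.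
Proof.
elim: c => [|x c IH]; first by rewrite rep_val_nil.
move=> /= /eqP; rewrite addn_eq0 => /andP [/eqP -> /eqP /IH].
by rewrite rep_val_cons => ->; rewrite mulr0 addr0.
Qed.

Lemma rep_val_rcons (r : rat) c x :
  rep_val r (rcons c x) = rep_val r c + x%:R * r ^+ size c.
Proof.
elim: c => [|y c IH] /=; first by rewrite rep_val_cons !rep_val_nil expr0; ring.
by rewrite !rep_val_cons IH exprS; ring.
Qed.

Lemma rep_val_rev (r : rat) c : r != 0 ->
  r ^+ size c * rep_val r^-1 (rev c) = r * rep_val r c.
Proof.
move=> hr; elim: c => [|x c IH]; first by rewrite /rev /= !rep_val_nil !mulr0.
rewrite rev_cons rep_val_rcons size_rev /= rep_val_cons exprS mulrDr -mulrA IH.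
have hinv : r ^+ size c * r^-1 ^+ size c = 1 by rewrite exprVn mulfV // expf_neq0.
rewrite -mulrA (mulrCA (r ^+ size c)) mulrA hinv mulr1 mulrDr; ring.
Qed.

Lemma rep_val_pad (r : rat) c m : rep_val r (c ++ nseq m 0%N) = rep_val r c.
Proof.
elim: c => [|x c IH] /=; last by rewrite !rep_val_cons IH.
by rewrite sumn0_rep_val ?rep_val_nil // sumn_nseq mul0n.
Qed.

Lemma rep_val_scale (r : rat) m c : rep_val r (map (muln m) c) = m%:R * rep_val r c.
Proof.
elim: c => [|x c IH] /=; first by rewrite !rep_val_nil mulr0.
by rewrite !rep_val_cons IH natrM; ring.
Qed.

Lemma inS_rep_val (r : rat) c : inS r (rep_val r c).
Proof. by exists c. Qed.

Lemma inS_rep (r x : rat) : inS r x -> exists c, x = rep_val r c.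
Proof. by []. Qed.

Lemma inS_monom (r : rat) k m : inS r (m%:R * r ^+ k).
Proof. by rewrite -rep_val_monom; apply: inS_rep_val. Qed.

Lemma inS_pow (r : rat) k : inS r (r ^+ k).
Proof. by rewrite -[_ ^+ k]mul1r -[1]/(1%:R); apply: inS_monom. Qed.

Lemma inS_nat (r : rat) (m : nat) : inS r m%:R.
Proof. by rewrite -[m%:R]mulr1 -(expr0 r); apply: inS_monom. Qed.

Lemma inS0 (r : rat) : inS r 0.
Proof. exact: (inS_nat r 0). Qed.

Lemma dvdS_le {r x y : rat} : 0 <= r -> dvdS r x y -> x <= y.
Proof. by move=> hr [_ [_ [w [/inS_rep [c ->] ->]]]]; rewrite lerDl rep_val_ge0. Qed.

Lemma atom_pos (r a : rat) : 0 <= r -> is_atom r a -> 0 < a.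
Proof.
by move=> hr [/inS_rep [c ->] [h0 _]]; rewrite lt0r rep_val_ge0 // andbT; apply/eqP.
Qed.

Lemma split_monom c : (0 < sumn c)%N -> exists i c', c = addrep (monom i 1) c'.
Proof.
elim: c => [|x c IH] //= h; case: x h => [|x] h.
  by have [i [c' ->]] := IH h; exists i.+1, (0%N :: c').
by exists 0%N, (x :: c); rewrite /monom /=; case: c {IH h}.
Qed.

Lemma atom_is_pow (r u : rat) : 0 < r -> is_atom r u -> exists i, u = r ^+ i.
Proof.
move=> hr [/inS_rep [c hc] [h0 hirr]].
have [|i [c' hc']] := split_monom c.
  by rewrite lt0n; apply/eqP => /(sumn0_rep_val r); rewrite -hc.
have e : u = r ^+ i + rep_val r c' by rewrite hc hc' rep_val_add rep_val_monom mul1r.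
exists i; case: (hirr _ _ (inS_pow r i) (inS_rep_val r c') e).
- by move/eqP; rewrite expf_eq0 (gt_eqF hr) andbF.
- by move=> h; rewrite e h addr0.
Qed.

Lemma fact_rep (r : rat) z : 0 < r -> r != 1 -> (forall a, a \in z -> is_atom r a) ->
  exists d, [/\ rep_val r d = \sum_(a <- z) a, sumn d = size z &
               (1 \in z -> (0 < head 0%N d)%N)].
Proof.
move=> hr hr1; elim: z => [|y z IH] hz; first by exists [::]; rewrite big_nil rep_val_nil.
have [d [hval hsize hhead]] : exists d, [/\ rep_val r d = \sum_(a <- z) a,
    sumn d = size z & (1 \in z -> (0 < head 0%N d)%N)].
  by apply: IH => a ha; apply: hz; rewrite inE ha orbT.
have [i hi] := atom_is_pow r y hr (hz y (mem_head _ _)).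
exists (addrep (monom i 1) d); split.
- by rewrite rep_val_add rep_val_monom mul1r big_cons hval hi.
- by rewrite sumn_addrep sumn_monom hsize.
- rewrite inE head_addrep => /orP [/eqP hy|/hhead]; last by lia.
  suff -> : i = 0%N by [].
  case: i hi => // i; rewrite -hy => /esym/eqP.
  by rewrite pexpr_eq1 // ?ltW // (negPf hr1).
Qed.

Lemma sum_nseq (n : nat) (x : rat) : \sum_(a <- nseq n x) a = n%:R * x.
Proof.
elim: n => [|n IH]; first by rewrite big_nil mul0r.
by rewrite big_cons IH -add1n natrD mulrDl mul1r.
Qed.

Lemma subseq_nseq (s : seq rat) x n : subseq s (nseq n x) -> s = nseq (size s) x.
Proof.
move=> hs; apply/all_pred1P/allP => y hy.
by have := mem_subseq hs hy; rewrite mem_nseq => /andP [_].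
Qed.

Lemma fdist_nseq (e : rat) m z :
  fdist (nseq m e) z = maxn (m - minn m (count_mem e z)) (size z - minn m (count_mem e z)).
Proof.
rewrite /fdist size_nseq; suff -> : gcd_len (nseq m e) z = minn m (count_mem e z) by [].
rewrite /gcd_len; case: m => [|m]; first by rewrite big_nil min0n.
have -> : undup (nseq m.+1 e) = [:: e].
  by elim: m => [|m IH] //=; rewrite inE eqxx; move: IH => /=.
by rewrite big_seq1 count_nseq /= eqxx mul1n.
Qed.

Lemma count_mem_sum_le (z : seq rat) e a0 : (forall a, a \in z -> 0 <= a) ->
  a0 \in z -> a0 != e -> (count_mem e z)%:R * e + a0 <= \sum_(a <- z) a.
Proof.
move=> hz.
have count_le (t : seq rat) : (forall a, a \in t -> 0 <= a) ->
    (count_mem e t)%:R * e <= \sum_(a <- t) a.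
  elim: t => [|y t IH] ht; first by rewrite big_nil mul0r.
  have ht' a : a \in t -> 0 <= a by move=> ha; apply: ht; rewrite inE ha orbT.
  have hy : 0 <= y by apply: ht; rewrite mem_head.
  rewrite big_cons /= natrD mulrDl.
  case: eqP => [->|_]; first by rewrite mul1r lerD2l IH.
  by rewrite mul0r add0r (le_trans (IH ht')) // lerDr.
elim: z hz => [|y z IH] hz //.
have hz' a : a \in z -> 0 <= a by move=> ha; apply: hz; rewrite inE ha orbT.
rewrite inE big_cons /= natrD mulrDl => /orP [/eqP <-|ha] hne.
  by rewrite (negPf hne) mul0r add0r addrC lerD2l count_le.
have hy : 0 <= y by apply: hz; rewrite mem_head.
have := IH hz' ha hne.
case: eqP => [->|_] h; first by rewrite mul1r -addrA lerD2l.
by rewrite mul0r add0r (le_trans h) // lerDr.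
Qed.

(** ** The integer case: S_n = N *)

Lemma rep_val_nat (n : nat) c : exists m : nat, rep_val n%:R c = m%:R.
Proof.
elim: c => [|x c [m IH]]; first by exists 0%N; rewrite rep_val_nil.
by exists (x + n * m)%N; rewrite rep_val_cons IH natrD natrM.
Qed.

Lemma nat_atom (n : nat) u : is_atom n%:R u -> u = 1.
Proof.
move=> [/inS_rep [c hc] [h0 hirr]].
have [m hm] := rep_val_nat n c; rewrite hc hm in h0 hirr *.
case: m hm h0 hirr => [|[|m]] hm h0 hirr //.
have : m.+2%:R = 1 + m.+1%:R :> rat by rewrite -natr1 addrC -[in RHS]natr1; ring.
move=> /(hirr _ _ (inS_nat _ 1) (inS_nat _ m.+1)) [] /eqP.
- by rewrite oner_eq0.
- by rewrite pnatr_eq0.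
Qed.

Lemma nat_fact (n : nat) z : (forall a, a \in z -> is_atom n%:R a) ->
  z = nseq (size z) 1.
Proof. by move=> hz; apply/all_pred1P/allP => y /hz /nat_atom ->. Qed.

Lemma nat_omega (r : rat) : 0 < r -> (exists n : nat, r = n%:R) -> omega_Sr_finite r.
Proof.
move=> hr [n er]; subst r; exists 1%N => a ha s hs hd.
have ha1 := nat_atom n a ha; subst a.
have hs1 := nat_fact n s hs.
have := dvdS_le (ltW hr) hd; rewrite hs1 sum_nseq mulr1.
case: (size s) hs1 => [|m] hs1; first by rewrite ler10.
move=> _; exists [:: 1]; split; first by rewrite sub1seq mem_nseq eqxx.
split => //; rewrite big_seq1; split; first exact: (inS_nat _ 1).
split; first exact: (inS_nat _ 1).
by exists 0; split; [exact: inS0 | rewrite addr0].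
Qed.

(** In S_n, every tame degree is 0: every factorization of a multiple of 1
    already contains 1. *)
Lemma nat_tame (r : rat) : 0 < r -> (exists n : nat, r = n%:R) -> globally_tame r.
Proof.
move=> hr [n er]; subst r; exists 0%N => a ha x _ hd z [hz hxz].
have ha1 := nat_atom n a ha; subst a; have hz1 := nat_fact n z hz.
exists z; split => //.
  have := dvdS_le (ltW hr) hd; rewrite hxz hz1 sum_nseq mulr1.
  by case: (size z) => [|m]; [rewrite ler10 | rewrite mem_nseq eqxx].
by rewrite hz1 fdist_nseq size_nseq count_nseq /= mul1n minnn subnn maxnn.
Qed.

Fixpoint clear_den (A B : nat) (c : seq nat) : nat :=
  match c with
  | [::] => 0%N
  | x :: c' => (x * B ^ size c + A * clear_den A B c')%N
  end.

Lemma clear_denE A B c : (0 < B)%N ->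
  (clear_den A B c)%:R = B%:R ^+ size c * rep_val (A%:R / B%:R) c.
Proof.
move=> hB; elim: c => [|x c IH] /=; first by rewrite rep_val_nil mulr0.
rewrite rep_val_cons natrD !natrM IH natrX exprS.
have hB0 : B%:R != 0 :> rat by rewrite pnatr_eq0 -lt0n.
by field.
Qed.

Lemma ratio_gt0 A B : (0 < A)%N -> (0 < B)%N -> 0 < (A%:R / B%:R : rat).
Proof. by move=> hA hB; rewrite divr_gt0 // ltr0n. Qed.

Lemma ratio_powE A B k : (0 < B)%N -> (A%:R / B%:R) ^+ k * B%:R ^+ k = (A ^ k)%:R :> rat.
Proof.
move=> hB; have hB0 : B%:R != 0 :> rat by rewrite pnatr_eq0 -lt0n.
by rewrite -exprMn natrX divfK.
Qed.

Lemma dvd_head_coef A B x c k m : (0 < B)%N -> coprime A B ->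
  rep_val (A%:R / B%:R) (x :: c) * B%:R ^+ k = (m * A)%:R -> (A %| x)%N.
Proof.
move=> hB hco h; set n := size (x :: c).
have e : ((x * B ^ n + A * clear_den A B c) * B ^ k)%N = (m * A * B ^ n)%N.
  apply/eqP; rewrite -(eqr_nat rat) natrM.
  rewrite (_ : (x * B ^ n + A * clear_den A B c)%N = clear_den A B (x :: c)) //.
  by rewrite clear_denE // natrM natrX -h natrX /n; apply/eqP; ring.
have : (A %| x * B ^ (n + k))%N.
  have e2 : (A * (clear_den A B c * B ^ k) + x * B ^ (n + k))%N = (A * (m * B ^ n))%N.
    by rewrite expnD; lia.
  by rewrite -(dvdn_addr _ (dvdn_mulr (clear_den A B c * B ^ k) (dvdnn A))) e2 dvdn_mulr.
by rewrite Gauss_dvdl // coprimeXr.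
Qed.

Lemma one_notin_rS A B c : (2 <= A)%N -> (0 < B)%N -> coprime A B ->
  rep_val (A%:R / B%:R) (0%N :: c) != 1.
Proof.
move=> hA hB hco; apply/eqP; rewrite rep_val_cons add0r => h.
have hB0 : B%:R != 0 :> rat by rewrite pnatr_eq0 -lt0n.
have hA0 : A%:R != 0 :> rat by rewrite pnatr_eq0; lia.
have : (A * clear_den A B c)%N = (B ^ (size c).+1)%N.
  apply/eqP; rewrite -(eqr_nat rat) natrM clear_denE // natrX exprS.
  have -> : rep_val (A%:R / B%:R) c = B%:R / A%:R.
    apply: (mulfI (x := A%:R / B%:R)); first by rewrite mulf_neq0 ?invr_eq0.
    by rewrite h; field; rewrite hA0 hB0.
  by apply/eqP; field.
move=> e; have : (A %| 1 * B ^ (size c).+1)%N by rewrite mul1n -e dvdn_mulr.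
by rewrite Gauss_dvdl ?coprimeXr // dvdn1; lia.
Qed.

Lemma rep_pow_lt A B : (2 <= A)%N -> (A < B)%N -> coprime A B ->
  forall k c, rep_val (A%:R / B%:R) c = (A%:R / B%:R) ^+ k -> sumn c = 1%N.
Proof.
move=> hA hAB hco; have hB : (0 < B)%N by lia.
set r := A%:R / B%:R : rat.
have r0 : 0 < r by apply: ratio_gt0; lia.
have r1 : r < 1 by rewrite /r ltr_pdivrMr ?ltr0n // mul1r ltr_nat.
elim=> [|k IH] [|x c].
- by rewrite rep_val_nil expr0 => /eqP; rewrite eq_sym oner_eq0.
- rewrite expr0 => h; have := rep_val_ge_head r x c (ltW r0); rewrite h.
  rewrite -[1]/(1%:R) ler_nat; case: x h => [|[|//]] h _.
    by move: (one_notin_rS A B c hA hB hco); rewrite h eqxx.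
  move: h; rewrite rep_val_cons -[RHS](addr0 1) => /addrI /eqP.
  by rewrite mulf_eq0 gt_eqF //= => /eqP /rep_val_eq0 -> //.
- by rewrite rep_val_nil => /eqP; rewrite eq_sym expf_eq0 gt_eqF.
- move=> h; have : (A %| x)%N.
    apply: (dvd_head_coef A B x c k.+1 (A ^ k)%N hB hco).
    by rewrite h ratio_powE // expnS mulnC.
  case: x h => [|x] h hd.
    by move: h; rewrite rep_val_cons add0r exprS => /(mulfI (lt0r_neq0 r0)) /IH.
  have : (A%:R : rat) <= 1.
    apply: (le_trans (y := x.+1%:R : rat)); first by rewrite ler_nat dvdn_leq.
    by rewrite (le_trans (rep_val_ge_head r x.+1 c (ltW r0))) // h; apply: exprn_ile1; apply: ltW.
  by rewrite -[1]/(1%:R) ler_nat; lia.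
Qed.

(** For A, B >= 2 coprime, every representation of (A/B)^k uses exactly one
    generator; for A > B this follows from the case A < B by reversing the
    coefficient sequence, i.e. passing to B/A. *)
Lemma rep_pow A B : (2 <= A)%N -> (2 <= B)%N -> coprime A B ->
  forall k c, rep_val (A%:R / B%:R) c = (A%:R / B%:R) ^+ k -> sumn c = 1%N.
Proof.
move=> hA hB hco k c h.
have [hAB|hBA|hAB] := ltngtP A B; first exact: rep_pow_lt A B hA hAB hco k c h.
- set r := A%:R / B%:R : rat in h.
  have r0 : 0 < r by apply: ratio_gt0; lia.
  set c2 := c ++ nseq k.+1 0%N.
  have hn : (k.+1 <= size c2)%N by rewrite size_cat size_nseq; lia.
  have e := rep_val_rev r c2 (lt0r_neq0 r0).
  rewrite rep_val_pad h -exprS -(subnK hn) exprD -mulrA in e.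
  have e2 : r ^+ (size c2 - k.+1) * rep_val r^-1 (rev c2) = 1.
    apply: (mulIf (expf_neq0 k.+1 (lt0r_neq0 r0))).
    by rewrite mul1r -[RHS]e; ring.
  have e3 : rep_val (B%:R / A%:R) (rev c2) = (B%:R / A%:R) ^+ (size c2 - k.+1).
    rewrite -invf_div exprVn.
    apply: (mulfI (expf_neq0 (size c2 - k.+1) (lt0r_neq0 r0))).
    by rewrite e2 mulfV // expf_neq0 // lt0r_neq0.
  have hco' : coprime B A by rewrite coprime_sym.
  have := rep_pow_lt B A hB hBA hco' _ _ e3.
  by rewrite sumn_rev /c2 sumn_cat sumn_nseq mul0n addn0.
- by move: hco; rewrite hAB /coprime gcdnn; lia.
Qed.

(** Bernoulli's inequality yields N < q^(N M + 1) as soon as q >= 1 + 1/M. *)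
Lemma pow_exceeds (q : rat) (M N : nat) : (0 < M)%N -> 1 + M%:R^-1 <= q ->
  N%:R < q ^+ (N * M).+1.
Proof.
move=> hM hq.
have hM0 : 0 < (M%:R : rat) by rewrite ltr0n.
have hMinv : 0 < (M%:R^-1 : rat) by rewrite invr_gt0.
have bernoulli n : 1 + n%:R / M%:R <= q ^+ n.
  elim: n => [|n IH]; first by rewrite mul0r addr0 expr0.
  have hn : 0 <= (n%:R / M%:R : rat) by rewrite divr_ge0 // ltW.
  have step : 1 + n.+1%:R / M%:R <= (1 + M%:R^-1 : rat) * (1 + n%:R / M%:R).
    by rewrite -natr1 mulrDl mul1r; nra.
  by rewrite exprS (le_trans step) // ler_pM // addr_ge0 // ltW.
apply: lt_le_trans (bernoulli _).
by rewrite -natr1 natrM mulrDl mulfK ?lt0r_neq0 //; lra.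
Qed.

Lemma ratio_pow_large (p s N : nat) : (0 < s)%N -> (s < p)%N ->
  N%:R < (p%:R / s%:R : rat) ^+ (N * s).+1.
Proof.
move=> hs hsp; apply: pow_exceeds => //.
have hs0 : s%:R != 0 :> rat by rewrite pnatr_eq0 -lt0n.
rewrite ler_pdivlMr ?ltr0n // mulrDl mul1r mulVf //.
by rewrite -[1]/(1%:R) -natrD ler_nat; lia.
Qed.

Lemma ratio_pow_small (A B N : nat) : (0 < A)%N -> (A < B)%N ->
  N%:R * (A%:R / B%:R : rat) ^+ (N * A).+1 < 1.
Proof.
move=> hA hAB; set k := (N * A).+1.
have hA0 : A%:R != 0 :> rat by rewrite pnatr_eq0 -lt0n.
have hB0 : B%:R != 0 :> rat by rewrite pnatr_eq0; lia.
have e : (B%:R / A%:R) ^+ k * (A%:R / B%:R) ^+ k = 1 :> rat.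
  by rewrite -exprMn mulrA divfK // mulfV // expr1n.
rewrite -[X in _ < X]e ltr_pM2r ?exprn_gt0 ?ratio_gt0 //; last by lia.
exact: ratio_pow_large.
Qed.

(** ** The non-integer case *)

(** S_(1/B) has no atoms: u = (u/B) + (B-1)(u/B) splits every element. *)
Lemma no_atoms (B : nat) u : (2 <= B)%N -> ~ is_atom (1 / B%:R) u.
Proof.
move=> hB [/inS_rep [c hc] [h0 hirr]].
set r := 1 / B%:R : rat in hc h0 hirr.
have hB0 : B%:R != 0 :> rat by rewrite pnatr_eq0; lia.
have r0 : r != 0 by rewrite /r mul1r invr_eq0.
have e : u = rep_val r (0%N :: c) + rep_val r (0%N :: map (muln B.-1) c).
  have hB1 : B.-1%:R = B%:R - 1 :> rat.
    by rewrite -[in RHS](prednK (_ : 0 < B)%N) ?(ltn_trans _ hB) // -natr1 addrK.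
  by rewrite !rep_val_cons rep_val_scale !add0r hc hB1 /r; field.
case: (hirr _ _ (inS_rep_val r _) (inS_rep_val r _) e) => /eqP;
  rewrite rep_val_cons add0r mulf_eq0 (negPf r0) /=.
- by rewrite -hc => /eqP.
- rewrite rep_val_scale mulf_eq0 pnatr_eq0 -hc (_ : (B.-1 == 0)%N = false) /=.
    by move/eqP.
  by apply/eqP; lia.
Qed.

Lemma nonint_ratio (r : rat) : 0 < r -> atomic r -> ~ (exists n : nat, r = n%:R) ->
  exists A B : nat, [/\ r = A%:R / B%:R, (2 <= A)%N, (2 <= B)%N & coprime A B].
Proof.
move=> hr hat hn.
set A := `|numq r|%N; set B := `|denq r|%N.
have eA : numq r = A%:Z by rewrite /A gez0_abs // ltW // numq_gt0.
have eB : denq r = B%:Z by rewrite /B gez0_abs // ltW // denq_gt0.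
have er : r = A%:R / B%:R by rewrite -[LHS]divq_num_den eA eB.
have hco : coprime A B by apply: coprime_num_den.
have hA0 : (0 < A)%N by rewrite /A absz_gt0 gt_eqF // numq_gt0.
have hB0 : (0 < B)%N by rewrite /B absz_gt0 gt_eqF // denq_gt0.
have hB : (2 <= B)%N.
  clearbody A B; clear eB; case: B hB0 er hco => [|[|B]] // _ er _.
  by case: hn; exists A; rewrite er divr1.
have hA : (2 <= A)%N.
  clearbody A; clear eA; case: A hA0 er hco => [|[|A]] // _ er _.
  have [|z [hz hzs]] := hat 1 (inS_nat r 1); first exact/eqP/oner_neq0.
  case: z hz hzs => [|y z] hz; first by rewrite big_nil => /eqP; rewrite oner_eq0.
  by have := hz y (mem_head _ _); rewrite er => /(no_atoms B y hB).
by exists A, B.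
Qed.

Lemma omega_gt_copies (r a e : rat) (M N : nat) : 0 <= r -> is_atom r e ->
  dvdS r a (M%:R * e) -> N%:R * e < a -> ~ omega_le r a N.
Proof.
move=> hr he hdiv hlt hN.
have hs a' : a' \in nseq M e -> is_atom r a' by rewrite mem_nseq => /andP [_ /eqP ->].
have [|s' [hsub [hsize hd]]] := hN _ hs; first by rewrite sum_nseq.
have := dvdS_le hr hd; rewrite (subseq_nseq _ _ _ hsub) sum_nseq => hle.
have : (size s')%:R * e <= N%:R * e by rewrite ler_pM2r ?(atom_pos _ _ hr he) // ler_nat.
by move=> /(le_trans hle) /(lt_le_trans hlt); rewrite ltxx.
Qed.

Lemma dvdS_monom (r : rat) k m : (0 < m)%N -> dvdS r (r ^+ k) (m%:R * r ^+ k).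
Proof.
move=> hm; split; first exact: inS_pow.
split; first exact: inS_monom.
exists ((m - 1)%:R * r ^+ k); split; first exact: inS_monom.
by rewrite -{2}(mul1r (r ^+ k)) -mulrDl -[1]/(1%:R) -natrD subnKC.
Qed.

Lemma dvdS_one_nat (r : rat) m : (0 < m)%N -> dvdS r 1 m%:R.
Proof. by move=> hm; have := dvdS_monom r 0 m hm; rewrite expr0 mulr1. Qed.

Section NonIntegerRatio.

Variables A B : nat.
Hypotheses (hA : (2 <= A)%N) (hB : (2 <= B)%N) (hco : coprime A B).
Local Notation r := (A%:R / B%:R : rat).

Let r_gt0 : 0 < r.
Proof. by apply: ratio_gt0; lia. Qed.

(** The powers r^k are atoms (and by [atom_is_pow] the only ones). *)
Lemma atom_pow k : is_atom r (r ^+ k).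
Proof.
split; first exact: inS_pow.
split; first by apply/eqP; rewrite expf_neq0 // lt0r_neq0.
move=> b c /inS_rep [cb ->] /inS_rep [cc ->] e.
have := rep_pow A B hA hB hco k (addrep cb cc).
rewrite rep_val_add -e sumn_addrep => /(_ erefl) hs.
have hb := sumn0_rep_val r cb; have hc := sumn0_rep_val r cc.
by case: (sumn cb) hb hs => [|[|//]] hb hs; [left; apply: hb | right; apply: hc; lia].
Qed.

Lemma atom_one : is_atom r 1.
Proof. by have := atom_pow 0; rewrite expr0. Qed.

(** Induction on k: the constant
    coefficient is a positive multiple m A of A; replacing these m A copies of
    1 by m B copies of r and dividing by r gives a representation of B r^k with
    nonzero constant coefficient and m (A - B) > 0 fewer generators. *)
Lemma long_rep : (B < A)%N -> forall k d,
  rep_val r d = B%:R * r ^+ k.+1 -> (0 < head 0%N d)%N -> (k.+1 <= sumn d)%N.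
Proof.
move=> hBA; have hB0 : B%:R != 0 :> rat by rewrite pnatr_eq0; lia.
elim=> [|k IH] [|x d] //=; first by lia.
move=> h hx; have : (A %| x)%N.
  apply: (dvd_head_coef A B x d k.+1 (A ^ k.+1)%N) => //; first by lia.
  by rewrite h (mulrC B%:R) -mulrA -exprS ratio_powE ?expnSr //; lia.
move=> /dvdnP [m hxm]; have hm : (0 < m)%N by move: hx; rewrite hxm; case: (m).
have he : rep_val r (bump_head d (m * B)) = B%:R * r ^+ k.+1.
  apply: (mulfI (lt0r_neq0 r_gt0)); rewrite [RHS]mulrCA -exprS -h.
  by rewrite rep_val_bump_head rep_val_cons hxm mulrDr !natrM; field.
have := IH _ he; rewrite sumn_bump_head /= hxm.
have hpos : (0 < head 0%N d + m * B)%N by nia.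
by move=> /(_ hpos); nia.
Qed.

Lemma one_dvd_pow : (B < A)%N -> forall k, dvdS r 1 (B%:R * r ^+ k.+1).
Proof.
move=> hBA k; have hB0 : B%:R != 0 :> rat by rewrite pnatr_eq0; lia.
have Br : B%:R * r = A%:R by rewrite mulrC divfK.
suff [w hw] : exists w, B%:R * r ^+ k.+1 = 1 + rep_val r w.
  split; first exact: (inS_nat r 1).
  by split; [exact: inS_monom | exists (rep_val r w); split; [exact: inS_rep_val|]].
elim: k => [|k [w IH]].
  exists [:: (A - 1)%N]; rewrite rep_val_cons rep_val_nil mulr0 addr0 expr1 Br.
  by rewrite -[1]/(1%:R) -natrD subnKC //; lia.
exists (addrep w (monom k.+1 (A - B))).
rewrite rep_val_add rep_val_monom natrB ?(ltnW hBA) // addrA -IH.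
by rewrite [in LHS]exprS mulrA Br; ring.
Qed.

(** omega(1) is infinite when r < 1: 1 divides A^k, the sum of B^k copies
    of r^k, but N copies of r^k sum to less than 1 for k = N A + 1. *)
Lemma omega_one_unbounded : (A < B)%N -> forall N, ~ omega_le r 1 N.
Proof.
move=> hAB N; set k := (N * A).+1.
apply: (omega_gt_copies r 1 (r ^+ k) (B ^ k) N (ltW r_gt0) (atom_pow k)).
  rewrite natrX [_ * r ^+ k]mulrC ratio_powE; last by lia.
  by apply: dvdS_one_nat; rewrite expn_gt0; lia.
by apply: ratio_pow_small; lia.
Qed.

(** omega(r^k) is infinite when r > 1: r^k divides A^k, the sum of A^k
    copies of 1, but N copies of 1 are less than r^k for k = N B + 1. *)
Lemma omega_pow_unbounded : (B < A)%N -> forall N, ~ omega_le r (r ^+ (N * B).+1) N.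
Proof.
move=> hBA N; set k := (N * B).+1.
apply: (omega_gt_copies r (r ^+ k) 1 (A ^ k) N (ltW r_gt0) atom_one).
  rewrite mulr1 -(ratio_powE A B k) ?[r ^+ k * _]mulrC -?natrX; last by lia.
  by apply: dvdS_monom; rewrite expn_gt0; lia.
by rewrite mulr1; apply: ratio_pow_large; lia.
Qed.

Lemma nonint_not_omega_finite : ~ omega_Sr_finite r.
Proof.
move=> [N hN]; have [hAB|hBA|hAB] := ltngtP A B.
- exact: omega_one_unbounded hAB N (hN _ atom_one).
- exact: omega_pow_unbounded hBA N (hN _ (atom_pow _)).
- by move: hco; rewrite hAB /coprime gcdnn; lia.
Qed.

(** t(1) is infinite when r < 1: a factorization of A^k containing 1 has at
    most A^k - 1 copies of r^k, hence is far from B^k copies of r^k. *)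
Lemma tame_one_unbounded_lt : (A < B)%N -> forall n, ~ tame_le r 1 n.
Proof.
move=> hAB n hn; set k := (n * A).+1.
have hrk : r ^+ k < 1.
  by rewrite exprn_ilt1 ?ltW // ltr_pdivrMr ?ltr0n ?mul1r ?ltr_nat //; lia.
have hz : is_fact r (A ^ k)%:R (nseq (B ^ k) (r ^+ k)).
  split; first by move=> a; rewrite mem_nseq => /andP [_ /eqP ->]; apply: atom_pow.
  by rewrite sum_nseq [_ * r ^+ k]mulrC (natrX _ B) ratio_powE //; lia.
have hdiv : dvdS r 1 (A ^ k)%:R.
  by apply: dvdS_one_nat; rewrite expn_gt0; lia.
have [z' [[hz' hsum] h1 hdist]] := hn _ (inS_nat r _) hdiv _ hz.
set c := count_mem (r ^+ k) z'.
have hcount : c%:R * r ^+ k + 1 <= (A ^ k)%:R.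
  rewrite hsum; apply: count_mem_sum_le => //; last by rewrite eq_sym lt_eqF.
  by move=> a /hz' /(atom_pos _ _ (ltW r_gt0)) /ltW.
have hBk : (B ^ k <= n + c)%N.
  by move: hdist; rewrite fdist_nseq -/c geq_max => /andP [+ _]; lia.
have : (A ^ k)%:R <= (n + c)%:R * r ^+ k.
  rewrite -(ratio_powE A B k) ?[r ^+ k * _]mulrC; last by lia.
  by rewrite ler_pM2r ?exprn_gt0 // -natrX ler_nat.
have hA0 : (0 < A)%N by lia.
have := ratio_pow_small A B n hA0 hAB; rewrite -/k natrD mulrDl; lra.
Qed.

(** t(1) is infinite when r > 1: 1 divides B r^(k+1), but by [long_rep] every
    factorization of it containing 1 has more than k atoms, hence is far from
    B copies of r^(k+1). *)
Lemma tame_one_unbounded_gt : (B < A)%N -> forall n, ~ tame_le r 1 n.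
Proof.
move=> hBA n hn; set k := (n + B)%N.
have hr1 : r != 1 by rewrite gt_eqF // ltr_pdivlMr ?ltr0n ?mul1r ?ltr_nat //; lia.
have hz : is_fact r (B%:R * r ^+ k.+1) (nseq B (r ^+ k.+1)).
  split; last by rewrite sum_nseq.
  by move=> a; rewrite mem_nseq => /andP [_ /eqP ->]; apply: atom_pow.
have [z' [[hz' hsum] h1 hdist]] := hn _ (inS_monom r _ _) (one_dvd_pow hBA k) _ hz.
have [d [hd hsize hhead]] := fact_rep r z' r_gt0 hr1 hz'.
have := long_rep hBA k d; rewrite hd -hsum hsize => /(_ erefl (hhead h1)) hlong.
move: hdist; rewrite fdist_nseq geq_max => /andP [_].
have := geq_minl B (count_mem (r ^+ k.+1) z'); rewrite /k in hlong.
set s := size z' in hlong *; clearbody s; lia.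
Qed.

Lemma nonint_not_locally_tame : ~ locally_tame r.
Proof.
move=> hlt; have [n hn] := hlt 1 atom_one; have [hAB|hBA|hAB] := ltngtP A B.
- exact: tame_one_unbounded_lt hAB n hn.
- exact: tame_one_unbounded_gt hBA n hn.
- by move: hco; rewrite hAB /coprime gcdnn; lia.
Qed.

End NonIntegerRatio.

Theorem theorem5p5 (r : rat) (hr : 0 < r) (hat : atomic r) :
  [<-> exists n : nat, r = n%:R;
       omega_Sr_finite r;
       globally_tame r;
       locally_tame r].
Proof.
have integral (P : rat -> Prop) :
    (forall A B, (2 <= A)%N -> (2 <= B)%N -> coprime A B -> ~ P (A%:R / B%:R)) ->
    P r -> exists n : nat, r = n%:R.
  move=> hP hPr; apply: NNPP => hn.
  have [A [B [er hA hB hco]]] := nonint_ratio r hr hat hn.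
  by apply: (hP A B hA hB hco); rewrite -er.
split; first exact: nat_omega.
split.
  move=> homega; apply: nat_tame => //; apply: (integral _ _ homega).
  exact: nonint_not_omega_finite.
split; first by move=> [n hn] a ha; exists n; apply: hn.
exact: integral nonint_not_locally_tame.
Qed.
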